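(* Let $N\ge3$ and let ${\bf k}=(k_0,\dots,k_{r-1})$ with every $k_m\ge1$ and $\sum_m k_m=N$. For $0\le m\le r-1$ let ${\bf k}^{(m)}$ be obtained from ${\bf k}$ by replacing $k_m$ by $k_m-1$. Then $$\Delta_{N,{\bf k}}\ \ge\ \frac{N(N-2)}{(N-1)^2}\,\min\{\Delta_{N-1,{\bf k}^{(m)}}:\ 0\le m\le r-1\}.$$
   Context: Fix $r\ge2$, distinct reals $e_0,\dots,e_{r-1}$. For $M\ge2$ and ${\bf j}=(j_0,\dots,j_{r-1})$ nonnegative integers with $\sum_m j_m=M$, the multislice $\mathcal{V}_{M,{\bf j}}$ is the set of $x\in\{e_0,\dots,e_{r-1}\}^M$ with exactly $j_m$ coordinates equal to $e_m$ for each $m$; $\mu_{M,{\bf j}}$ is the uniform probability measure on it. For $i<j$, $\pi_{i,j}x$ swaps coordinates $i$ and $j$ of $x$. The Dirichlet form is $$\mathcal{D}_{M,{\bf j}}(f,f)=\frac{1}{M-1}\sum_{x\in\mathcal{V}_{M,{\bf j}}}\sum_{1\le i<j\le M}(f(\pi_{i,j}x)-f(x))^2\,\mu_{M,{\bf j}}(x),$$ and $\Delta_{M,{\bf j}}=\inf\{\mathcal{D}_{M,{\bf j}}(f,f):\ \|f\|_{L^2(\mu_{M,{\bf j}})}=1,\ \langle f,1\rangle_{L^2(\mu_{M,{\bf j}})}=0\}$, with the convention that the infimum over an empty set (when $\mathcal{V}_{M,{\bf j}}$ is a single point) is $+\infty$. *)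

From HB Require Import structures.
From mathcomp Require Import all_boot all_order all_algebra.
From mathcomp Require Import all_classical all_reals ereal.
Set Implicit Arguments. Unset Strict Implicit. Unset Printing Implicit Defensive.
Import Order.TTheory GRing.Theory Num.Theory.
Local Open Scope ring_scope.
Local Open Scope classical_set_scope.

Section Multislice.
Variables (R : realType) (r : nat) (e : 'I_r -> R).

(* Colourings c : 'I_M -> 'I_r with exactly j m coordinates of colour m.
   The multislice point attached to c is x = e o c (coordinate i equals e_(c i)). *)
Definition mslice (M : nat) (j : 'I_r -> nat) : {set {ffun 'I_M -> 'I_r}} :=
  [set c : {ffun 'I_M -> 'I_r} | [forall m : 'I_r, #|[pred i | c i == m]| == j m]].

Definition mpoint (M : nat) (c : {ffun 'I_M -> 'I_r}) : 'I_M -> R :=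
  fun i => e (c i).

Definition swapc (M : nat) (i j : 'I_M) (x : 'I_M -> R) : 'I_M -> R :=
  fun k => if k == i then x j else if k == j then x i else x k.

Definition mexp (M : nat) (j : 'I_r -> nat) (g : ('I_M -> R) -> R) : R :=
  \sum_(c in mslice M j) g (mpoint c) / #|mslice M j|%:R.

Definition dirichlet (M : nat) (j : 'I_r -> nat) (f : ('I_M -> R) -> R) : R :=
  (M.-1)%:R^-1 *
  mexp j (fun x => \sum_(i < M) \sum_(i' < M | (i < i')%N)
                     (f (swapc i i' x) - f x) ^+ 2).

(* Delta_{M,j} : infimum (in \bar R; inf of the empty set is +oo) *)
Definition gap (M : nat) (j : 'I_r -> nat) : \bar R :=
  ereal_inf [set y : \bar R | exists f : ('I_M -> R) -> R,
     [/\ mexp j (fun x => f x ^+ 2) = 1,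
         mexp j (fun x => f x) = 0 &
         y = (dirichlet j f)%:E]].

End Multislice.

Definition kdec (r : nat) (k : 'I_r -> nat) (m : 'I_r) : 'I_r -> nat :=
  fun l => if l == m then (k l).-1 else k l.

(* Write N = M + 1 and let f be a centred, normalised function on V = V_{N,k},
   viewed as a function of colourings c : 'I_N -> 'I_r.  Fixing coordinate i
   to colour m identifies the fibre {c i = m} with V_{M,k^(m)}, and the
   Dirichlet form of the restricted function only involves the transpositions
   avoiding i.  Each transposition avoids exactly N - 2 = M - 1 coordinates,
   which is also the normalisation of the fibre Dirichlet forms, so summing
   the gap inequalities of all fibres shows that the swap energy of f is at
   least lambda times the total fibre variance N |V| - Z, where
   Z = sum_{i,m} (sum_{c i = m} f)^2 / #{c i = m}.  The degree-one function
   h(c) = sum_i E[f | c_i] satisfies <f, h> = Z and (N - 1) |h|^2 = N Z, so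
   Cauchy-Schwarz gives Z <= N |V| / (N - 1); together these yield the
   constant N (N - 2) / (N - 1)^2. *)

From HB Require Import structures.
From mathcomp Require Import all_boot all_order all_algebra.
From mathcomp Require Import all_classical all_reals ereal.
From mathcomp Require Import fingroup perm ring lra zify.
Set Implicit Arguments. Unset Strict Implicit. Unset Printing Implicit Defensive.
Import Order.TTheory GRing.Theory Num.Theory.
Local Open Scope ring_scope.

Section IndicatorSums.
Variables (R : pzRingType) (I : finType).

Lemma sum_delta_mul (a : I) (g : I -> R) : \sum_i (a == i)%:R * g i = g a.
Proof.
rewrite (bigD1 a) //= eqxx mul1r big1 ?addr0 // => i /negbTE.
by rewrite eq_sym => ->; rewrite mul0r.
Qed.

Lemma sum_delta (a : I) : \sum_i ((a == i)%:R : R) = 1.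
Proof. by rewrite -[RHS](sum_delta_mul a (fun _ => 1)); apply: eq_bigr => i _; rewrite mulr1. Qed.

Lemma sum_indicator (P : pred I) : \sum_i ((P i)%:R : R) = #|P|%:R.
Proof.
rewrite -sum1_card natr_sum [RHS]big_mkcond /=; apply: eq_bigr => i _.
by rewrite unfold_in; case: (P i).
Qed.

End IndicatorSums.

Lemma sum_all_but (V : zmodType) (I : finType) (i : I) (G : I -> V) :
  \sum_(j | j != i) G j = \sum_j G j - G i.
Proof. by rewrite [X in _ = X - _](bigD1 i) //= addrC addrK. Qed.

Section ColouringSums.
Variables (R : pzRingType) (r N : nat) (k : 'I_r -> nat).

Lemma mslice_count (c : {ffun 'I_N -> 'I_r}) m :
  c \in mslice N k -> \sum_x ((c x == m)%:R : R) = (k m)%:R.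
Proof.
rewrite inE => /forallP /(_ m) /eqP <-.
exact: sum_indicator.
Qed.

Lemma sum_mslice_perm (G : {ffun 'I_N -> 'I_r} -> R) (s : {perm 'I_N}) :
  \sum_(c in mslice N k) G c = \sum_(c in mslice N k) G [ffun x => c (s x)].
Proof.
pose h (c : {ffun 'I_N -> 'I_r}) := [ffun x => c (s x)].
have h_inj : injective h.
  move=> c1 c2 /ffunP E; apply/ffunP => x; have := E (s^-1 x)%g.
  by rewrite !ffunE permKV.
rewrite [LHS](reindex_inj h_inj) /=; apply: eq_bigl => c.
rewrite !inE; apply: eq_forallb => m; congr (_ == _).
rewrite -!sum1_card [in RHS](reindex_inj (@perm_inj _ s)) /=.
by apply: eq_bigl => x; rewrite /h unfold_in /= ffunE.
Qed.

Lemma sum_split_colour (A : {pred {ffun 'I_N -> 'I_r}}) i (G : {ffun 'I_N -> 'I_r} -> R) :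
  \sum_m \sum_(c in A) (c i == m)%:R * G c = \sum_(c in A) G c.
Proof.
by rewrite exchange_big; apply: eq_bigr => c _; rewrite -mulr_suml sum_delta mul1r.
Qed.

End ColouringSums.
Arguments mslice_count {R r N k c} m _.

Lemma energy_le_of_projection (R : realFieldType) (I : finType) (A : {pred I})
    (F h : I -> R) (a b Z : R) :
  0 < a -> 0 < b ->
  \sum_(c in A) F c * h c = Z -> a * \sum_(c in A) h c ^+ 2 = b * Z ->
  a * Z <= b * \sum_(c in A) F c ^+ 2.
Proof.
move=> a_gt0 b_gt0 Fh hh; pose t := a / b.
have : 0 <= \sum_(c in A) (F c - t * h c) ^+ 2 by apply: sumr_ge0 => c _; apply: sqr_ge0.
have -> : \sum_(c in A) (F c - t * h c) ^+ 2 =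
    \sum_(c in A) F c ^+ 2 - 2 * t * Z + t ^+ 2 / a * (a * \sum_(c in A) h c ^+ 2).
  rewrite -Fh mulrA divfK ?gt_eqF // !mulr_sumr -sumrB -big_split /=.
  by apply: eq_bigr => c _; ring.
rewrite hh /t => H.
have tZ : (a / b) ^+ 2 / a * (b * Z) = a / b * Z by field; rewrite !gt_eqF.
have -> : a * Z = b * (a / b * Z) by field; rewrite gt_eqF.
by rewrite ler_pM2l //; lra.
Qed.

Section DegreeOneProjection.
Variables (R : realFieldType) (r N : nat) (k : 'I_r -> nat).
Variable F : {ffun 'I_N -> 'I_r} -> R.
Hypothesis k_gt0 : forall m, (0 < k m)%N.
Hypothesis N_gt1 : (1 < N)%N.
Hypothesis mslice_gt0 : (0 < #|mslice N k|)%N.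
Hypothesis F_centred : \sum_(c in mslice N k) F c = 0.

Local Notation V := (mslice N k).

Definition cnt i m : R := \sum_(c in V) (c i == m)%:R.
Definition cnt2 i m j l : R := \sum_(c in V) (c i == m)%:R * (c j == l)%:R.
Definition csum i m : R := \sum_(c in V) (c i == m)%:R * F c.
Definition cmean i m : R := csum i m / cnt i m.
(* Up to the factor (N - 1) / N, [proj] is the orthogonal projection of the
   centred [F] onto the functions of the form c |-> sum_i a_i (c i). *)
Definition proj (c : {ffun 'I_N -> 'I_r}) : R := \sum_i cmean i (c i).
Definition proj_energy : R := \sum_i \sum_m csum i m ^+ 2 / cnt i m.

Lemma cnt_perm i i' m : cnt i m = cnt i' m.
Proof.
rewrite /cnt (sum_mslice_perm _ _ (tperm i i')); apply: eq_bigr => c _.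
by rewrite ffunE tpermL.
Qed.

Lemma cnt_marginal i m : N%:R * cnt i m = #|V|%:R * (k m)%:R.
Proof.
have -> : N%:R * cnt i m = \sum_i' cnt i' m.
  by rewrite (eq_bigr (fun _ => cnt i m)) ?sumr_const ?card_ord ?mulr_natl //
     => i' _; apply: cnt_perm.
rewrite /cnt exchange_big /= (eq_bigr (fun _ => (k m)%:R)).
  by rewrite sumr_const mulr_natl.
by move=> c cV; rewrite (mslice_count m cV).
Qed.

Lemma cnt_gt0 i m : 0 < cnt i m.
Proof.
have : 0 < N%:R * cnt i m by rewrite cnt_marginal mulr_gt0 ?ltr0n ?k_gt0.
by rewrite pmulr_rgt0 // ltr0n ltnW.
Qed.

Lemma cnt2_perm i m j j' l : j != i -> j' != i -> cnt2 i m j l = cnt2 i m j' l.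
Proof.
move=> ji j'i; rewrite /cnt2 (sum_mslice_perm _ _ (tperm j j')).
by apply: eq_bigr => c _; rewrite !ffunE tpermL tpermD // eq_sym.
Qed.

Lemma cnt2_diag i m l : cnt2 i m i l = (m == l)%:R * cnt i m.
Proof.
rewrite /cnt2 /cnt mulr_sumr; apply: eq_bigr => c _.
by case: (eqVneq (c i) m) => [->|]; rewrite ?mul0r ?mulr0 ?mul1r ?mulr1.
Qed.

Lemma cnt2_marginal i m j l : j != i ->
  (N%:R - 1) * cnt2 i m j l = cnt i m * ((k l)%:R - (m == l)%:R).
Proof.
move=> ji.
have -> : (N%:R - 1) * cnt2 i m j l = \sum_(j' | j' != i) cnt2 i m j' l.
  rewrite (eq_bigr (fun _ => cnt2 i m j l)) => [|j' j'i]; last exact: cnt2_perm.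
  by rewrite (sum_all_but i) sumr_const card_ord mulrBl mul1r mulr_natl.
rewrite /cnt2 exchange_big /= /cnt mulr_suml; apply: eq_bigr => c cV.
rewrite -mulr_sumr sum_all_but (mslice_count l cV).
by case: (eqVneq (c i) m) => [->|]; rewrite ?mul0r ?mul1r.
Qed.

Lemma cmeanK i m : cmean i m * cnt i m = csum i m.
Proof. by rewrite divfK // gt_eqF // cnt_gt0. Qed.

Lemma sum_cmean_coord m : \sum_i cmean i m = 0.
Proof.
pose i0 : 'I_N := Ordinal (ltnW N_gt1).
rewrite (eq_bigr (fun i => csum i m / cnt i0 m)) => [|i _].
  2: by rewrite /cmean (cnt_perm i i0).
rewrite -mulr_suml /csum exchange_big /= (eq_bigr (fun c => (k m)%:R * F c)).
  by rewrite -mulr_sumr F_centred mulr0 mul0r.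
by move=> c cV; rewrite -mulr_suml (mslice_count m cV).
Qed.

Lemma sum_cmean_colour i : \sum_l (k l)%:R * cmean i l = 0.
Proof.
have V_neq0 : #|V|%:R != 0 :> R by rewrite pnatr_eq0 -lt0n.
have kcmean l : (k l)%:R * cmean i l = N%:R / #|V|%:R * csum i l.
  have -> : (k l)%:R = N%:R / #|V|%:R * cnt i l.
    by rewrite mulrAC cnt_marginal mulrAC divff ?mul1r.
  by rewrite -(cmeanK i l); ring.
rewrite (eq_bigr _ (fun l _ => kcmean l)) -mulr_sumr /csum exchange_big /=.
rewrite (eq_bigr (fun c => F c)) ?F_centred ?mulr0 // => c _.
by rewrite -mulr_suml sum_delta mul1r.
Qed.

Lemma proj_indicator c : proj c = \sum_i \sum_m (c i == m)%:R * cmean i m.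
Proof. by apply: eq_bigr => i _; rewrite sum_delta_mul. Qed.

Lemma cross_proj : \sum_(c in V) F c * proj c = proj_energy.
Proof.
under eq_bigr do rewrite proj_indicator mulr_sumr.
rewrite exchange_big; apply: eq_bigr => i _ /=.
under eq_bigr do rewrite mulr_sumr.
rewrite exchange_big; apply: eq_bigr => m _ /=.
rewrite (eq_bigr (fun c : {ffun _} => (c i == m)%:R * F c * cmean i m)) => [|c _]; last ring.
by rewrite -mulr_suml /cmean expr2 mulrA.
Qed.

Lemma sum_indicator_proj i m :
  \sum_(c in V) (c i == m)%:R * proj c = \sum_j \sum_l cmean j l * cnt2 i m j l.
Proof.
under eq_bigr do rewrite proj_indicator mulr_sumr.
rewrite exchange_big; apply: eq_bigr => j _ /=.
under eq_bigr do rewrite mulr_sumr.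
rewrite exchange_big; apply: eq_bigr => l _ /=.
by rewrite /cnt2 mulr_sumr; apply: eq_bigr => c _; ring.
Qed.

Lemma csum_proj i m :
  (N%:R - 1) * \sum_(c in V) (c i == m)%:R * proj c = N%:R * csum i m.
Proof.
have diag : \sum_l cmean i l * cnt2 i m i l = csum i m.
  under eq_bigr do rewrite cnt2_diag mulrCA.
  by rewrite sum_delta_mul cmeanK.
have off j : j != i ->
    (N%:R - 1) * \sum_l cmean j l * cnt2 i m j l = - (cnt i m * cmean j m).
  move=> ji; rewrite mulr_sumr (eq_bigr (fun l =>
    cnt i m * ((k l)%:R * cmean j l) - cnt i m * ((m == l)%:R * cmean j l))).
    2: by move=> l _; rewrite mulrCA cnt2_marginal //; ring.
  by rewrite sumrB -!mulr_sumr sum_cmean_colour sum_delta_mul mulr0 sub0r.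
rewrite sum_indicator_proj (bigD1 i) //= diag mulrDr [X in _ + X]mulr_sumr.
rewrite (eq_bigr (fun j => - (cnt i m * cmean j m))) => [|j]; last exact: off.
rewrite sumrN -mulr_sumr sum_all_but sum_cmean_coord sub0r.
by rewrite mulrN opprK [cnt i m * _]mulrC cmeanK mulrBl mul1r subrK.
Qed.

Lemma norm_proj : (N%:R - 1) * \sum_(c in V) proj c ^+ 2 = N%:R * proj_energy.
Proof.
under eq_bigr do rewrite expr2 {1}proj_indicator mulr_suml.
rewrite exchange_big mulr_sumr [RHS]mulr_sumr; apply: eq_bigr => i _ /=.
under eq_bigr do rewrite mulr_suml.
rewrite exchange_big mulr_sumr [RHS]mulr_sumr; apply: eq_bigr => m _ /=.
rewrite (eq_bigr (fun c : {ffun _} => cmean i m * ((c i == m)%:R * proj c))) => [|c _]; last ring.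
by rewrite -mulr_sumr mulrCA csum_proj /cmean; ring.
Qed.

Lemma proj_energy_le : (N%:R - 1) * proj_energy <= N%:R * \sum_(c in V) F c ^+ 2.
Proof.
apply: (energy_le_of_projection _ _ cross_proj norm_proj).
  by rewrite subr_gt0 ltr1n.
by rewrite ltr0n ltnW.
Qed.

End DegreeOneProjection.

Section Fibre.
Variables (r M : nat) (i : 'I_M.+1) (m : 'I_r).

Definition extend (d : {ffun 'I_M -> 'I_r}) : {ffun 'I_M.+1 -> 'I_r} :=
  [ffun x => if unlift i x is Some y then d y else m].
Definition restrict (c : {ffun 'I_M.+1 -> 'I_r}) : {ffun 'I_M -> 'I_r} :=
  [ffun y => c (lift i y)].

Lemma extendK : cancel extend restrict.
Proof. by move=> d; apply/ffunP => y; rewrite !ffunE liftK. Qed.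

Lemma extend_at d : extend d i = m.
Proof. by rewrite ffunE unlift_none. Qed.

Lemma extend_lift d y : extend d (lift i y) = d y.
Proof. by rewrite ffunE liftK. Qed.

Lemma restrictK (c : {ffun 'I_M.+1 -> 'I_r}) : c i = m -> extend (restrict c) = c.
Proof.
move=> ci; apply/ffunP => x; rewrite !ffunE.
by case: unliftP => [y ->|->]; rewrite ?ffunE.
Qed.

Lemma lift_ltn (j j' : 'I_M) : (lift i j < lift i j')%N = (j < j')%N.
Proof. rewrite /= /bump; case: (leqP i j); case: (leqP i j') => *; lia. Qed.

Lemma card_extend d l :
  #|[pred x | extend d x == l]| = ((m == l) + #|[pred y | d y == l]|)%N.
Proof.
rewrite -!sum1_card !big_mkcond (bigD1_ord i) //= !unfold_in /= extend_at.
congr (_ + _)%N.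
by rewrite [RHS]big_mkcond; apply: eq_bigr => y _; rewrite !unfold_in /= extend_lift.
Qed.

Variable k : 'I_r -> nat.
Hypothesis km_gt0 : (0 < k m)%N.

Lemma extend_mslice d : (extend d \in mslice M.+1 k) = (d \in mslice M (kdec k m)).
Proof.
rewrite !inE; apply: eq_forallb => l; rewrite card_extend /kdec.
case: (eqVneq l m) => [->|//].
by rewrite -{1}(prednK km_gt0) add1n eqSS.
Qed.

Lemma sum_fibre (R : pzSemiRingType) (G : {ffun 'I_M.+1 -> 'I_r} -> R) :
  \sum_(c in mslice M.+1 k) (c i == m)%:R * G c =
  \sum_(d in mslice M (kdec k m)) G (extend d).
Proof.
under eq_bigr do rewrite mulr_natl mulrb.
rewrite -big_mkcondr /=.
rewrite (reindex_onto extend restrict) => [|c /andP [_ /eqP]]; last exact: restrictK.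
by apply: eq_bigl => d; rewrite extend_mslice extend_at extendK !eqxx !andbT.
Qed.

End Fibre.

Definition pair_sum (R : nmodType) n (G : 'I_n -> 'I_n -> R) : R :=
  \sum_(x < n) \sum_(x' < n | (x < x')%N) G x x'.

Lemma pair_sum_avoid (R : comPzRingType) n (G : 'I_n -> 'I_n -> R) :
  \sum_i pair_sum (fun x x' => ((x != i) && (x' != i))%:R * G x x') =
  (n%:R - 2) * pair_sum G.
Proof.
rewrite exchange_big mulr_sumr; apply: eq_bigr => x _ /=.
rewrite exchange_big mulr_sumr; apply: eq_bigr => x' lt_xx' /=.
rewrite -mulr_suml; congr (_ * _).
have x'x : (x' == x) = false by apply/negbTE; rewrite neq_ltn lt_xx' orbT.
rewrite (eq_bigr (fun i => 1 - (x == i)%:R - (x' == i)%:R + (x == i)%:R * (x' == i)%:R)).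
  by rewrite big_split /= !sumrB sumr_const card_ord sum_delta_mul !sum_delta x'x /=; ring.
by move=> i _; case: (x == i); case: (x' == i) => /=; ring.
Qed.

Section SwapEnergy.
Variables (R : realType) (r : nat) (e : 'I_r -> R).

Definition swap_energy n (f : ('I_n -> R) -> R) (x : 'I_n -> R) : R :=
  pair_sum (fun j j' => (f (swapc j j' x) - f x) ^+ 2).

Definition avoid_energy n (i : 'I_n) (f : ('I_n -> R) -> R) (x : 'I_n -> R) : R :=
  pair_sum (fun j j' => ((j != i) && (j' != i))%:R * (f (swapc j j' x) - f x) ^+ 2).

Variables (M : nat) (i : 'I_M.+1) (m : 'I_r).

Definition freeze (f : ('I_M.+1 -> R) -> R) (y : 'I_M -> R) : R :=
  f (fun x => if unlift i x is Some z then y z else e m).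

Lemma freeze_point f d : freeze f (mpoint e d) = f (mpoint e (extend i m d)).
Proof.
rewrite /freeze; congr f; apply: boolp.funext => x; rewrite /mpoint ffunE.
by case: unlift.
Qed.

Lemma freeze_swap f d j j' :
  freeze f (swapc j j' (mpoint e d)) =
  f (swapc (lift i j) (lift i j') (mpoint e (extend i m d))).
Proof.
rewrite /freeze; congr f; apply: boolp.funext => x; rewrite /swapc /mpoint.
case: unliftP => [z ->|->]; first by rewrite !(inj_eq (@lift_inj _ i)) !extend_lift.
by rewrite !(negbTE (neq_lift _ _)) extend_at.
Qed.

Lemma swap_energy_freeze f d :
  swap_energy (freeze f) (mpoint e d) = avoid_energy i f (mpoint e (extend i m d)).
Proof.
have lift_neq y : (lift i y != i) = true by rewrite eq_sym neq_lift.
rewrite /avoid_energy /pair_sum (bigD1_ord i) //= big1 ?add0r => [|x' _]; last first.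
  by rewrite eqxx mul0r.
apply: eq_bigr => j _; rewrite [RHS]big_mkcond (bigD1_ord i) //= eqxx andbF mul0r.
rewrite if_same add0r big_mkcond; apply: eq_bigr => j' _.
by rewrite lift_ltn !lift_neq mul1r freeze_swap freeze_point.
Qed.

End SwapEnergy.

Section UniformExpectation.
Variables (R : realType) (r : nat) (e : 'I_r -> R) (M : nat) (j : 'I_r -> nat).
Local Notation S := (mslice M j).
Local Notation mx := (@mexp R r e M j).
Implicit Types (g : ('I_M -> R) -> R) (h : ('I_M -> R) -> R).

Lemma mexpE h : mx h = (\sum_(c in S) h (mpoint e c)) / #|S|%:R.
Proof. by rewrite /mexp mulr_suml. Qed.

Lemma mexp_card h : #|S|%:R * mx h = \sum_(c in S) h (mpoint e c).
Proof.
have [S0|S_gt0] := posnP #|S|; last by rewrite mexpE mulrC divfK // pnatr_eq0 -lt0n.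
by rewrite S0 mul0r big_pred0 // => c; apply/negbTE; rewrite (card0_eq S0).
Qed.

Lemma eq_mexp h1 h2 : h1 =1 h2 -> mx h1 = mx h2.
Proof. by move=> E; rewrite !mexpE; under eq_bigr do rewrite E. Qed.

Lemma mexpD h1 h2 : mx (fun x => h1 x + h2 x) = mx h1 + mx h2.
Proof. by rewrite !mexpE big_split /= mulrDl. Qed.

Lemma mexpZ a h : mx (fun x => a * h x) = a * mx h.
Proof. by rewrite !mexpE -mulr_sumr mulrA. Qed.

Lemma mexp_cst a : (0 < #|S|)%N -> mx (fun _ => a) = a.
Proof. by move=> S_gt0; rewrite mexpE sumr_const -[a *+ _]mulr_natr mulfK // pnatr_eq0 -lt0n. Qed.

Lemma mexp_ge0 h : (forall x, 0 <= h x) -> 0 <= mx h.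
Proof. by move=> h_ge0; rewrite mexpE divr_ge0 // sumr_ge0. Qed.

Lemma swap_energy_ge0 n (g : ('I_n -> R) -> R) x : 0 <= swap_energy g x.
Proof. by apply: sumr_ge0 => *; apply: sumr_ge0 => *; apply: sqr_ge0. Qed.

Lemma dirichletE g : dirichlet e j g = (M.-1)%:R^-1 * mx (swap_energy g).
Proof. by []. Qed.

Lemma dirichlet_ge0 g : 0 <= dirichlet e j g.
Proof. by rewrite mulr_ge0 ?invr_ge0 ?ler0n // mexp_ge0 // => x; apply: swap_energy_ge0. Qed.

Lemma dirichlet_affine a b g :
  dirichlet e j (fun x => a * g x + b) = a ^+ 2 * dirichlet e j g.
Proof.
rewrite !dirichletE mulrCA; congr (_ * _); rewrite -mexpZ; apply: eq_mexp => x.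
rewrite /swap_energy /pair_sum mulr_sumr; apply: eq_bigr => i _.
by rewrite mulr_sumr; apply: eq_bigr => i' _; ring.
Qed.

Lemma gap_ge0 : (0 <= gap e M j)%E.
Proof. by apply: le_ereal_inf_tmp => _ [g [_ _ ->]]; rewrite lee_fin dirichlet_ge0. Qed.

Lemma variance_le_dirichlet lam g : (lam%:E <= gap e M j)%E ->
  lam * (mx (fun x => g x ^+ 2) - mx g ^+ 2) <= dirichlet e j g.
Proof.
move=> lam_le; have [S0|S_gt0] := posnP #|S|.
  have mx0 h : mx h = 0 by rewrite mexpE S0 invr0 mulr0.
  by rewrite !mx0 expr0n /= subrr mulr0 dirichlet_ge0.
set mu := mx g; set v := mx (fun x => g x ^+ 2) - mu ^+ 2.
have var_v : mx (fun x => (g x - mu) ^+ 2) = v.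
  rewrite (@eq_mexp _ (fun x => g x ^+ 2 + (-2 * mu * g x + mu ^+ 2))) => [|x]; last ring.
  by rewrite !mexpD mexpZ mexp_cst // /v /mu; ring.
have v_ge0 : 0 <= v by rewrite -var_v mexp_ge0 // => x; apply: sqr_ge0.
have [v0|v_neq0] := eqVneq v 0; first by rewrite v0 mulr0 dirichlet_ge0.
have {v_ge0 v_neq0} v_gt0 : 0 < v by rewrite lt_def v_neq0.
pose s := (Num.sqrt v)^-1.
have s2 : s ^+ 2 = v^-1 by rewrite exprVn sqr_sqrtr // ltW.
have : (gap e M j <= (dirichlet e j (fun x => s * g x + - (s * mu)))%:E)%E.
  apply: ereal_inf_lbound; exists (fun x => s * g x + - (s * mu)); split => //.
    rewrite (@eq_mexp _ (fun x => s ^+ 2 * (g x - mu) ^+ 2)) => [|x]; last ring.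
    by rewrite mexpZ var_v s2 mulVf // gt_eqF.
  by rewrite mexpD mexpZ mexp_cst // subrr.
move/(le_trans lam_le); rewrite lee_fin dirichlet_affine s2 mulrC -ler_pdivlMr //.
Qed.

Lemma sum_variance_le lam g : (lam%:E <= gap e M j)%E ->
  lam * (M.-1)%:R * (\sum_(c in S) g (mpoint e c) ^+ 2
                      - (\sum_(c in S) g (mpoint e c)) ^+ 2 / #|S|%:R)
  <= \sum_(c in S) swap_energy g (mpoint e c).
Proof.
move=> /(variance_le_dirichlet g) var_le.
rewrite -(mexp_card (fun x => g x ^+ 2)) -(mexp_card g) -(mexp_card (swap_energy g)).
set n : R := #|S|%:R.
have -> : (n * mx g) ^+ 2 / n = n * mx g ^+ 2.
  by have [->|n_neq0] := eqVneq n 0; [rewrite !mul0r expr0n /= mul0r | field].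
have -> : lam * (M.-1)%:R * (n * mx (fun x => g x ^+ 2) - n * mx g ^+ 2) =
    n * ((M.-1)%:R * (lam * (mx (fun x => g x ^+ 2) - mx g ^+ 2))) by ring.
rewrite ler_wpM2l ?ler0n //.
have [->|M1_neq0] := eqVneq ((M.-1)%:R : R) 0.
  by rewrite mul0r mexp_ge0 // => x; apply: swap_energy_ge0.
by rewrite -(mulVKf M1_neq0 (mx (swap_energy g))) -dirichletE ler_wpM2l ?ler0n.
Qed.

End UniformExpectation.

Section FibreInduction.
Variables (R : realType) (r : nat) (e : 'I_r -> R) (M : nat) (k : 'I_r -> nat).
Variables (f : ('I_M.+1 -> R) -> R) (lam : R).
Hypothesis M_gt1 : (1 < M)%N.
Hypothesis k_gt0 : forall m, (0 < k m)%N.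
Hypothesis lam_le_gap : forall m, (lam%:E <= gap e M (kdec k m))%E.

Local Notation V := (mslice M.+1 k).
Local Notation F := (fun c : {ffun 'I_M.+1 -> 'I_r} => f (mpoint e c)).

Lemma fibre_variance_le i m :
  lam * (M.-1)%:R *
    (\sum_(c in V) (c i == m)%:R * F c ^+ 2 - csum k F i m ^+ 2 / cnt R k i m)
  <= \sum_(c in V) (c i == m)%:R * avoid_energy i f (mpoint e c).
Proof.
set V' := mslice M (kdec k m); set f' := freeze e i m f.
have fibre (G : {ffun 'I_M.+1 -> 'I_r} -> R) := sum_fibre i (k_gt0 m) G.
have -> : cnt R k i m = #|V'|%:R.
  rewrite /cnt (eq_bigr (fun c : {ffun _} => (c i == m)%:R * 1)) => [|c _]; last by rewrite mulr1.
  by rewrite fibre sumr_const.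
have -> : csum k F i m = \sum_(d in V') f' (mpoint e d).
  by rewrite /csum fibre; apply: eq_bigr => d _; rewrite /f' freeze_point.
have -> : \sum_(c in V) (c i == m)%:R * F c ^+ 2 = \sum_(d in V') f' (mpoint e d) ^+ 2.
  by rewrite fibre; apply: eq_bigr => d _; rewrite /f' freeze_point.
have -> : \sum_(c in V) (c i == m)%:R * avoid_energy i f (mpoint e c) =
    \sum_(d in V') swap_energy f' (mpoint e d).
  by rewrite fibre; apply: eq_bigr => d _; rewrite /f' swap_energy_freeze.
exact: sum_variance_le.
Qed.

Lemma swap_energy_lower_bound :
  lam * ((M.+1)%:R * \sum_(c in V) F c ^+ 2 - proj_energy k F)
  <= \sum_(c in V) swap_energy f (mpoint e c).
Proof.
have M1_gt0 : 0 < (M.-1)%:R :> R by rewrite ltr0n -subn1 subn_gt0.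
rewrite -(ler_pM2l M1_gt0) mulrA [_ * lam]mulrC.
have -> : (M.+1)%:R * \sum_(c in V) F c ^+ 2 - proj_energy k F =
    \sum_i \sum_m (\sum_(c in V) (c i == m)%:R * F c ^+ 2 - csum k F i m ^+ 2 / cnt R k i m).
  under [RHS]eq_bigr do rewrite sumrB sum_split_colour.
  by rewrite sumrB sumr_const card_ord mulr_natl.
have -> : (M.-1)%:R * \sum_(c in V) swap_energy f (mpoint e c) =
    \sum_i \sum_m \sum_(c in V) (c i == m)%:R * avoid_energy i f (mpoint e c).
  under [RHS]eq_bigr do rewrite sum_split_colour.
  rewrite [RHS]exchange_big mulr_sumr; apply: eq_bigr => c _ /=.
  by rewrite pair_sum_avoid -natrB ?subSS ?subn1 // ltnW.
rewrite mulr_sumr; apply: ler_sum => i _; rewrite mulr_sumr; apply: ler_sum => m _.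
exact: fibre_variance_le.
Qed.

Hypothesis lam_ge0 : 0 <= lam.
Hypothesis f_norm : mexp e k (fun x => f x ^+ 2) = 1.
Hypothesis f_centred : mexp e k f = 0.

Lemma dirichlet_lower_bound : lam * ((M.+1 * M.-1)%:R / (M ^ 2)%:R) <= dirichlet e k f.
Proof.
have sumF2 : \sum_(c in V) F c ^+ 2 = #|V|%:R.
  by rewrite -(mexp_card e k (fun x => f x ^+ 2)) f_norm mulr1.
have sumF : \sum_(c in V) F c = 0 by rewrite -(mexp_card e k f) f_centred mulr0.
have V_gt0 : (0 < #|V|)%N.
  rewrite lt0n; apply/eqP => V0; move: f_norm; rewrite mexpE V0 invr0 mulr0.
  by move/eqP; rewrite eq_sym oner_eq0.
have := proj_energy_le k_gt0 (ltnW M_gt1 : (1 < M.+1)%N) V_gt0 sumF.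
have := swap_energy_lower_bound.
rewrite dirichletE mexpE sumF2 -natr1 addrK natrM natrX -subn1 natrB ?(ltnW M_gt1) //.
set Z := proj_energy k F; set A := \sum_(c in V) _; set n : R := #|V|%:R.
move=> A_ge Z_le; rewrite -natr1 /=.
have M_gt0 : 0 < M%:R :> R by rewrite ltr0n ltnW.
have n_gt0 : 0 < n by rewrite ltr0n.
have -> : lam * ((M%:R + 1) * (M%:R - 1) / M%:R ^+ 2) =
    (lam * (M%:R + 1) * (M%:R - 1) * n) / (M%:R ^+ 2 * n).
  by field; rewrite !gt_eqF.
have -> : M%:R^-1 * (A / n) = (M%:R * A) / (M%:R ^+ 2 * n).
  by field; rewrite !gt_eqF.
apply: ler_wpM2r; first by rewrite invr_ge0 mulr_ge0 ?exprn_ge0 ?ltW.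
(* M times A_ge plus lam times Z_le *)
have := ler_wpM2l lam_ge0 Z_le; have := ler_wpM2l (ltW M_gt0) A_ge; nra.
Qed.

End FibreInduction.

Lemma mule_le_of_real_lbounds (R : realType) (c D : R) (mu : \bar R) :
  0 < c -> (0 <= mu)%E ->
  (forall lam, 0 <= lam -> (lam%:E <= mu)%E -> c * lam <= D) ->
  (c%:E * mu <= D%:E)%E.
Proof.
move=> c_gt0; case: mu => [lam | | //] mu_ge0 le_D.
  by rewrite -EFinM lee_fin; apply: le_D; rewrite -?lee_fin.
have lam_ge0 : 0 <= (`|D| + 1) / c by rewrite divr_ge0 ?ltW // ltr_wpDl.
exfalso; have := le_D _ lam_ge0 (leey _); rewrite mulrCA divff ?gt_eqF // mulr1.
by have := ler_norm D; lra.
Qed.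

Theorem theorem3p1 (R : realType) (r : nat) (e : 'I_r -> R) (N : nat)
    (k : 'I_r -> nat) :
  (2 <= r)%N -> injective e -> (3 <= N)%N ->
  (forall m, (1 <= k m)%N) -> (\sum_(m < r) k m)%N = N ->
  (((N * (N - 2))%:R / ((N - 1) ^ 2)%:R : R)%:E
     * \big[Order.min/+oo%E]_(m < r) gap e (N - 1) (kdec k m)
   <= gap e N k)%E.
Proof.
(* The bound holds without the hypotheses on r, e and the sum of k. *)
move=> _ _ N_gt2 k_gt0 _; case: N N_gt2 => [//|M] M_gt1.
rewrite subSS !subn1 /=.
apply: le_ereal_inf_tmp => _ [f [f_norm f_centred ->]].
apply: mule_le_of_real_lbounds.
- by rewrite divr_gt0 // ltr0n ?muln_gt0 ?expn_gt0 -?subn1 ?subn_gt0 // ltnW.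
- by apply: le_bigmin => // m _; apply: gap_ge0.
move=> lam lam_ge0 lam_le; rewrite mulrC.
apply: dirichlet_lower_bound => // m.
by apply: le_trans lam_le _; apply: bigmin_le.
Qed.
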